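(* Each of the three 2-arc matrix factorizations $\widehat{\gamma}\in\{\widehat{\gamma}_{\mathrm{par}},\widehat{\gamma}_{\mathrm{vir}},\widehat{\gamma}_{\mathrm{hor}}\}$ of $W_4$ over $R$ is isomorphic to $K_{\mathrm{cmn}}\otimes_R\widetilde{\gamma}_{\mathrm p}$, where $\widetilde{\gamma}_{\mathrm p}=R\otimes_{R_{\mathrm p}}\widehat{\gamma}_{\mathrm p}$ is the base change along $\phi_{\mathrm p}$ of the corresponding proper matrix factorization, and $K_{\mathrm{cmn}}$ is the Koszul matrix factorization with rows $(x_1+x_2+x_3+x_4\mid A(\mathbf x,\mathbf y))$ and $(y_1+y_2+y_3+y_4\mid B(\mathbf x,\mathbf y))$, with \[ A=-(y_3+y_4)(y_1+y_2+y_4)-y_1y_2+w(-x_1,x_3)+(x_2+x_4)\,w(x_1,x_2,-x_3)-(x_2+x_4)(x_1+x_4)\big(w(x_1,-x_1,x_2,x_4)+w(x_1,-x_1,-x_2,x_4)\big), \] \[ B=x_1y_1+x_2y_2+x_3y_3-x_4y_4 . \]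
   Context: Fix $N\ge1$, $w(x)=x^{2N+1}$, $W(x,y)=xy^2+x^{2N+1}$, and iterated divided differences $w(x_1,\dots,x_{n-1},x_n)=\frac{w(x_1,\dots,x_{n-2},x_{n-1})-w(x_1,\dots,x_{n-2},x_n)}{x_{n-1}-x_n}$ (symmetric polynomials). Let $R=\mathbb{Q}[x_1,\dots,x_4,y_1,\dots,y_4]$, $q$-graded by $\deg x_i=2$, $\deg y_i=2N$, and $W_4=\sum_{i=1}^4W(x_i,y_i)$. A matrix factorization of $V$ over a ring $R$ is a $\mathbb{Z}/2$-graded free module with odd endomorphism $D$, $D^2=V\cdot\mathrm{id}$. For $a_i,b_i\in R$ with $\sum a_ib_i=V$, the Koszul matrix factorization with rows $(a_i\mid b_i)$ is the tensor product over $R$ of the rank-$(1,1)$ factorizations $Re_0\oplus Re_1$, $De_0=b_ie_1$, $De_1=a_ie_0$ ($e_0$ even, $e_1$ odd). The 1-arc factorization $A(i,j)$ is the Koszul matrix factorization with rows $(y_j+y_i\mid x_j(y_j-y_i))$, $(x_j+x_i\mid y_i^2+w(-x_i,x_j))$. Set $\widehat{\gamma}_{\mathrm{par}}=A(1,3)\otimes A(2,4)$, $\widehat{\gamma}_{\mathrm{vir}}=A(1,4)\otimes A(2,3)$, $\widehat{\gamma}_{\mathrm{hor}}=A(1,2)\otimes A(3,4)$ (tensor products over $\mathbb{Q}$, giving matrix factorizations of $W_4$ over $R$). Let $R_{\mathrm p}=\mathbb{Q}[p_1,p_2,q_1,q_2,r_1,r_2,C]$ and $W_{4,\mathrm p}=p_1q_2r_2+q_1p_2r_2+r_1p_2q_2+p_1q_1r_1C$.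 The proper matrix factorizations of $W_{4,\mathrm p}$ are the Koszul matrix factorizations: $\widehat{\gamma}_{\mathrm{par,p}}$ with rows $(p_1\mid q_2r_2+q_1r_1C)$, $(p_2\mid q_2r_1+q_1r_2)$; $\widehat{\gamma}_{\mathrm{vir,p}}$ with rows $(r_1\mid p_2q_2+p_1q_1C)$, $(r_2\mid p_1q_2+p_2q_1)$; $\widehat{\gamma}_{\mathrm{hor,p}}$ with rows $(q_1\mid p_2r_2+p_1r_1C)$, $(q_2\mid p_1r_2+p_2r_1)$. The ring homomorphism $\phi_{\mathrm p}:R_{\mathrm p}\to R$ is $p_1\mapsto x_2+x_4$, $q_1\mapsto x_3+x_4$, $r_1\mapsto x_1+x_4$, $p_2\mapsto y_2+y_4$, $q_2\mapsto y_3+y_4$, $r_2\mapsto y_1+y_4$, $C\mapsto \tilde C(\mathbf x)=w(x_1,x_2,-x_3,x_4)+w(x_1,-x_1,x_2,x_4)+w(x_1,-x_1,-x_2,x_4)$. *)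

From HB Require Import structures.
From mathcomp Require Import all_boot all_order all_algebra.
From mathcomp Require Import mpoly.
Set Implicit Arguments. Unset Strict Implicit. Unset Printing Implicit Defensive.
Import Order.TTheory GRing.Theory Num.Theory.
Local Open Scope ring_scope.

(* A Z/2-graded free S-module with a finite basis mfI, parity of basis
   elements mfpar (true = odd), and an endomorphism D given by its matrix:
   mfD t s = coefficient of basis vector e_t in D(e_s). *)
Record mfd (S : comNzRingType) := MFD {
  mfI : finType;
  mfpar : mfI -> bool;
  mfD : mfI -> mfI -> S }.
Arguments mfI {S} m.
Arguments mfpar {S} m _.
Arguments mfD {S} m _ _.

Definition is_mf (S : comNzRingType) (V : S) (M : mfd S) : Prop :=
  (forall t s, mfpar M t = mfpar M s -> mfD M t s = 0) /\
  (forall t s, \sum_(k : mfI M) mfD M t k * mfD M k s = (t == s)%:R * V).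

Definition mf_unit (S : comNzRingType) : mfd S :=
  @MFD S unit (fun _ => false) (fun _ _ => 0).

(* rank (1,1) factorization  S e0 + S e1,  D e0 = b e1, D e1 = a e0
   (e0 = false even, e1 = true odd) *)
Definition mf_rank1 (S : comNzRingType) (a b : S) : mfd S :=
  @MFD S bool (fun s => s)
    (fun t s => if s then (if t then 0 else a) else (if t then b else 0)).

(* graded tensor product over S:
   D (u (x) v) = D u (x) v + (-1)^|u| u (x) D v *)
Definition mf_tensor (S : comNzRingType) (M N : mfd S) : mfd S :=
  @MFD S (mfI M * mfI N)%type
    (fun ij => mfpar M ij.1 (+) mfpar N ij.2)
    (fun t s => mfD M t.1 s.1 * (t.2 == s.2)%:R
              + (t.1 == s.1)%:R * (-1) ^+ mfpar M s.1 * mfD N t.2 s.2).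

Fixpoint koszul (S : comNzRingType) (rows : seq (S * S)) : mfd S :=
  match rows with
  | [::] => mf_unit S
  | r :: rs => mf_tensor (mf_rank1 r.1 r.2) (koszul rs)
  end.

Definition mf_base_change (S T : comNzRingType) (f : S -> T) (M : mfd S) : mfd T :=
  @MFD T (mfI M) (mfpar M) (fun t s => f (mfD M t s)).

Definition mf_iso (S : comNzRingType) (M N : mfd S) : Prop :=
  exists (P : mfI N -> mfI M -> S) (Q : mfI M -> mfI N -> S),
    [/\ (forall j i, mfpar N j != mfpar M i -> P j i = 0 /\ Q i j = 0),
        (forall j j', \sum_(i : mfI M) P j i * Q i j' = (j == j')%:R),
        (forall i i', \sum_(j : mfI N) Q i j * P j i' = (i == i')%:R) &
        (forall j i, \sum_(k : mfI M) P j k * mfD M k i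
                   = \sum_(k : mfI N) mfD N j k * P k i)].

Fixpoint hsym (S : comNzRingType) (k : nat) (xs : seq S) : S :=
  match xs with
  | [::] => (k == 0)%:R
  | x :: xs' => \sum_(j < k.+1) x ^+ j * hsym (k - j) xs'
  end.

(* w(x_1,...,x_n) = iterated divided difference of x^(2N+1)
                  = h_{2N+2-n}(x_1,...,x_n)   (n <= 2N+2) *)
Definition wdd (S : comNzRingType) (N : nat) (xs : seq S) : S :=
  hsym (2 * N + 2 - size xs) xs.

Definition Rr := {mpoly rat[8]}.
Definition Rp := {mpoly rat[7]}.

Definition xv (i : nat) : Rr := 'X_(@inord 7 i.-1).
Definition yv (i : nat) : Rr := 'X_(@inord 7 (i + 3)).

Definition p1 : Rp := 'X_(@inord 6 0).
Definition p2 : Rp := 'X_(@inord 6 1).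
Definition q1 : Rp := 'X_(@inord 6 2).
Definition q2 : Rp := 'X_(@inord 6 3).
Definition r1 : Rp := 'X_(@inord 6 4).
Definition r2 : Rp := 'X_(@inord 6 5).
Definition Cv : Rp := 'X_(@inord 6 6).

Definition W_pot (N : nat) (x y : Rr) : Rr := x * y ^+ 2 + x ^+ (2 * N + 1).
Definition W4 (N : nat) : Rr := \sum_(1 <= i < 5) W_pot N (xv i) (yv i).
Definition W4p : Rp := p1 * q2 * r2 + q1 * p2 * r2 + r1 * p2 * q2 + p1 * q1 * r1 * Cv.

Definition arcA (N : nat) (i j : nat) : mfd Rr :=
  koszul [:: (yv j + yv i, xv j * (yv j - yv i));
             (xv j + xv i, yv i ^+ 2 + wdd N [:: - xv i; xv j])].

Definition gam_par (N : nat) := mf_tensor (arcA N 1 3) (arcA N 2 4).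
Definition gam_vir (N : nat) := mf_tensor (arcA N 1 4) (arcA N 2 3).
Definition gam_hor (N : nat) := mf_tensor (arcA N 1 2) (arcA N 3 4).

Definition gam_par_p : mfd Rp :=
  koszul [:: (p1, q2 * r2 + q1 * r1 * Cv); (p2, q2 * r1 + q1 * r2)].
Definition gam_vir_p : mfd Rp :=
  koszul [:: (r1, p2 * q2 + p1 * q1 * Cv); (r2, p1 * q2 + p2 * q1)].
Definition gam_hor_p : mfd Rp :=
  koszul [:: (q1, p2 * r2 + p1 * r1 * Cv); (q2, p1 * r2 + p2 * r1)].

Definition Ctilde (N : nat) : Rr :=
  wdd N [:: xv 1; xv 2; - xv 3; xv 4]
  + wdd N [:: xv 1; - xv 1; xv 2; xv 4]
  + wdd N [:: xv 1; - xv 1; - xv 2; xv 4].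

Definition phi_p (N : nat) (f : Rp) : Rr :=
  comp_mpoly [tuple xv 2 + xv 4; yv 2 + yv 4; xv 3 + xv 4; yv 3 + yv 4;
                    xv 1 + xv 4; yv 1 + yv 4; Ctilde N] f.

Definition tilde (N : nat) (M : mfd Rp) : mfd Rr := mf_base_change (phi_p N) M.

Definition Acmn (N : nat) : Rr :=
  - (yv 3 + yv 4) * (yv 1 + yv 2 + yv 4) - yv 1 * yv 2
  + wdd N [:: - xv 1; xv 3]
  + (xv 2 + xv 4) * wdd N [:: xv 1; xv 2; - xv 3]
  - (xv 2 + xv 4) * (xv 1 + xv 4)
      * (wdd N [:: xv 1; - xv 1; xv 2; xv 4] + wdd N [:: xv 1; - xv 1; - xv 2; xv 4]).

Definition Bcmn : Rr := xv 1 * yv 1 + xv 2 * yv 2 + xv 3 * yv 3 - xv 4 * yv 4.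

Definition Kcmn (N : nat) : mfd Rr :=
  koszul [:: (xv 1 + xv 2 + xv 3 + xv 4, Acmn N); (yv 1 + yv 2 + yv 3 + yv 4, Bcmn)].

(* Both sides are Koszul factorizations with four rows, and a Koszul factorization is
   unchanged up to isomorphism by the row operations adding c * a_j to a_i while
   subtracting c * b_i from b_j, adding c * a_j to b_i while subtracting c * a_i from b_j,
   and exchanging two rows.  Each operation is an explicit isomorphism on two rows, and it
   extends to any list of rows because the graded tensor product is associative, unital
   and functorial.  A fixed sequence of such operations carries the rows of each 2-arc
   factorization to those of K_cmn (x) tilde(gamma_p), provided some identities between
   divided differences hold; these follow from w(.., a) - w(.., b) = (a - b) w(.., a, b),
   the symmetry of w, and w(-xs) = (-1)^|xs| w(xs). *)

From HB Require Import structures.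
From mathcomp Require Import all_boot all_algebra.
From mathcomp Require Import mpoly.
From mathcomp Require Import ring zify.
From Stdlib Require Import FunctionalExtensionality.

Set Implicit Arguments. Unset Strict Implicit. Unset Printing Implicit Defensive.
Import GRing.Theory.
Local Open Scope ring_scope.

Lemma funext2 (A B C : Type) (f g : A -> B -> C) : (forall a b, f a b = g a b) -> f = g.
Proof. by move=> fg; do 2 apply: functional_extensionality => ?; apply: fg. Qed.

Section FunMatrix.
Variable S : comNzRingType.

Definition fmx_mul (I J K : finType) (A : I -> J -> S) (B : J -> K -> S) : I -> K -> S :=
  fun i k => \sum_j A i j * B j k.

Definition fmx1 {I : finType} : I -> I -> S := fun i j => (i == j)%:R.

Definition fmx_add (I J : finType) (A B : I -> J -> S) : I -> J -> S :=
  fun i j => A i j + B i j.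

Definition fmx_kron (I J K L : finType) (A : I -> J -> S) (B : K -> L -> S) :
  I * K -> J * L -> S := fun t s => A t.1 s.1 * B t.2 s.2.

Definition fmx_even (I J : finType) (pI : I -> bool) (pJ : J -> bool) (A : I -> J -> S) :=
  forall i j, pI i != pJ j -> A i j = 0.

Lemma sum_deltal (T : finType) (x : T) (F : T -> S) : \sum_k (x == k)%:R * F k = F x.
Proof.
rewrite (bigD1 x) //= eqxx mul1r big1 ?addr0 // => k.
by rewrite eq_sym => /negbTE ->; rewrite mul0r.
Qed.

Lemma sum_deltar (T : finType) (x : T) (F : T -> S) : \sum_k F k * (k == x)%:R = F x.
Proof. by under eq_bigr do rewrite mulrC eq_sym; apply: sum_deltal. Qed.

Section Products.
Variables I J K L : finType.

Lemma fmx_mulA (H : finType) (A : H -> I -> S) (B : I -> J -> S) (C : J -> K -> S) :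
  fmx_mul (fmx_mul A B) C = fmx_mul A (fmx_mul B C).
Proof.
apply: funext2 => h k.
rewrite /fmx_mul; under eq_bigr do rewrite big_distrl.
under [RHS]eq_bigr do rewrite big_distrr.
rewrite exchange_big; apply: eq_bigr => i _; apply: eq_bigr => j _.
exact: esym (mulrA _ _ _).
Qed.

Lemma fmx_mul1l (A : I -> J -> S) : fmx_mul fmx1 A = A.
Proof.
by apply: funext2 => i j; apply: sum_deltal.
Qed.

Lemma fmx_mul1r (A : I -> J -> S) : fmx_mul A fmx1 = A.
Proof.
by apply: funext2 => i j; apply: sum_deltar.
Qed.

Lemma fmx_mulDl (A B : I -> J -> S) (C : J -> K -> S) :
  fmx_mul (fmx_add A B) C = fmx_add (fmx_mul A C) (fmx_mul B C).
Proof.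
apply: funext2 => i k.
by rewrite /fmx_mul /fmx_add -big_split; apply: eq_bigr => j _; rewrite mulrDl.
Qed.

Lemma fmx_mulDr (A : I -> J -> S) (B C : J -> K -> S) :
  fmx_mul A (fmx_add B C) = fmx_add (fmx_mul A B) (fmx_mul A C).
Proof.
apply: funext2 => i k.
by rewrite /fmx_mul /fmx_add -big_split; apply: eq_bigr => j _; rewrite mulrDr.
Qed.

Lemma fmx_mul_kron (I' J' K' : finType) (A : I -> J -> S) (B : J -> K -> S)
    (A' : I' -> J' -> S) (B' : J' -> K' -> S) :
  fmx_mul (fmx_kron A A') (fmx_kron B B') = fmx_kron (fmx_mul A B) (fmx_mul A' B').
Proof.
apply: funext2 => t s.
rewrite /fmx_mul /fmx_kron -(pair_bigA _ (fun j j' => A t.1 j * A' t.2 j' * (B j s.1 * B' j' s.2))).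
rewrite big_distrl; apply: eq_bigr => j _ /=; rewrite big_distrr.
by apply: eq_bigr => j' _; rewrite mulrACA.
Qed.

Lemma fmx_kron1 : fmx_kron (@fmx1 I) (@fmx1 J) = fmx1.
Proof.
apply: funext2 => -[i j] [i' j'].
by rewrite /fmx_kron /fmx1 /= xpair_eqE -natrM mulnb.
Qed.

Lemma fmx_even1 (pI : I -> bool) : fmx_even pI pI fmx1.
Proof. by move=> i j; rewrite /fmx1; have [->|_] := eqVneq i j; rewrite ?eqxx. Qed.

Lemma fmx_even_kron (pI : I -> bool) (pJ : J -> bool) (pK : K -> bool) (pL : L -> bool)
    (A : I -> J -> S) (B : K -> L -> S) :
  fmx_even pI pJ A -> fmx_even pK pL B ->
  fmx_even (fun t => pI t.1 (+) pK t.2) (fun s => pJ s.1 (+) pL s.2) (fmx_kron A B).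
Proof.
move=> eA eB [i k] [j l] /= neq; rewrite /fmx_kron /=.
have [eij|nij] := eqVneq (pI i) (pJ j); last by rewrite eA ?mul0r.
by rewrite eB ?mulr0 //; apply: contraNneq neq => ->; rewrite eij.
Qed.

Lemma fmx_even_mul (pI : I -> bool) (pJ : J -> bool) (pK : K -> bool)
    (A : I -> J -> S) (B : J -> K -> S) :
  fmx_even pI pJ A -> fmx_even pJ pK B -> fmx_even pI pK (fmx_mul A B).
Proof.
move=> eA eB i k neq; rewrite /fmx_mul big1 // => j _.
have [eij|nij] := eqVneq (pI i) (pJ j); last by rewrite eA ?mul0r.
by rewrite eB ?mulr0 // -eij.
Qed.

End Products.
End FunMatrix.

Arguments fmx1 {S I}.
Arguments fmx_even1 {S I}.

Section MatrixFactorizationIso.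
Variable S : comNzRingType.
Implicit Types M N L : mfd S.

Definition mf_sign M : mfI M -> mfI M -> S := fun t s => (t == s)%:R * (-1) ^+ mfpar M s.
Arguments mf_sign : clear implicits.

Lemma mfD_tensor M N :
  mfD (mf_tensor M N) = fmx_add (fmx_kron (mfD M) fmx1) (fmx_kron (mf_sign M) (mfD N)).
Proof. by []. Qed.

Lemma mf_isoP M N :
  mf_iso M N <-> exists P Q,
    [/\ fmx_even (mfpar N) (mfpar M) P, fmx_even (mfpar M) (mfpar N) Q,
        fmx_mul P Q = fmx1, fmx_mul Q P = fmx1 & fmx_mul P (mfD M) = fmx_mul (mfD N) P].
Proof.
split=> -[P [Q]].
  case=> ePQ PQ QP PD; exists P, Q; split.
  - by move=> j i /ePQ [].
  - by move=> i j; rewrite eq_sym => /ePQ [].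
  - exact: funext2 PQ.
  - exact: funext2 QP.
  - exact: funext2 PD.
case=> eP eQ PQ QP PD; exists P, Q; split.
- by move=> j i n; split; [apply: eP | apply: eQ; rewrite eq_sym].
- by move=> j j'; rewrite -[RHS]/(fmx1 j j') -PQ.
- by move=> i i'; rewrite -[RHS]/(fmx1 i i') -QP.
- by move=> j i; rewrite -[LHS]/(fmx_mul P (mfD M) j i) PD.
Qed.

Lemma mf_iso_sym M N : mf_iso M N -> mf_iso N M.
Proof.
move/mf_isoP=> [P [Q [eP eQ PQ QP PD]]]; apply/mf_isoP; exists Q, P; split=> //.
rewrite -[LHS]fmx_mul1r -PQ -fmx_mulA [fmx_mul (fmx_mul Q _) P]fmx_mulA -PD.
by rewrite -fmx_mulA QP fmx_mul1l.
Qed.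

Lemma mf_iso_trans M N L : mf_iso M N -> mf_iso N L -> mf_iso M L.
Proof.
move/mf_isoP=> [P [Q [eP eQ PQ QP PD]]] /mf_isoP [P' [Q' [eP' eQ' PQ' QP' PD']]].
apply/mf_isoP; exists (fmx_mul P' P), (fmx_mul Q Q'); split.
- exact: fmx_even_mul eP' eP.
- exact: fmx_even_mul eQ eQ'.
- by rewrite fmx_mulA -[fmx_mul P (fmx_mul Q Q')]fmx_mulA PQ fmx_mul1l.
- by rewrite fmx_mulA -[fmx_mul Q' (fmx_mul P' P)]fmx_mulA QP' fmx_mul1l.
- by rewrite fmx_mulA PD -fmx_mulA PD' fmx_mulA.
Qed.

Lemma mf_sign_even M M' (P : mfI M' -> mfI M -> S) :
  fmx_even (mfpar M') (mfpar M) P -> fmx_mul P (mf_sign M) = fmx_mul (mf_sign M') P.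
Proof.
move=> eP; apply: funext2 => j i.
rewrite /fmx_mul /mf_sign.
under eq_bigr do rewrite mulrA.
rewrite -big_distrl /= sum_deltar.
under eq_bigr do rewrite -mulrA.
rewrite sum_deltal.
have [->|nji] := eqVneq (mfpar M' j) (mfpar M i); first by rewrite mulrC.
by rewrite eP // mul0r mulr0.
Qed.

Lemma mf_iso_tensorl M M' N : mf_iso M M' -> mf_iso (mf_tensor M N) (mf_tensor M' N).
Proof.
move/mf_isoP=> [P [Q [eP eQ PQ QP PD]]].
apply/mf_isoP; exists (fmx_kron P fmx1), (fmx_kron Q fmx1); split.
- exact: fmx_even_kron eP (fmx_even1 _).
- exact: fmx_even_kron eQ (fmx_even1 _).
- by rewrite fmx_mul_kron PQ fmx_mul1l fmx_kron1.
- by rewrite fmx_mul_kron QP fmx_mul1l fmx_kron1.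
rewrite !mfD_tensor fmx_mulDr fmx_mulDl !fmx_mul_kron !fmx_mul1l !fmx_mul1r PD.
by rewrite mf_sign_even.
Qed.

Lemma mf_iso_tensorr M N N' : mf_iso N N' -> mf_iso (mf_tensor M N) (mf_tensor M N').
Proof.
move/mf_isoP=> [P [Q [eP eQ PQ QP PD]]].
apply/mf_isoP; exists (fmx_kron fmx1 P), (fmx_kron fmx1 Q); split.
- exact: fmx_even_kron (fmx_even1 _) eP.
- exact: fmx_even_kron (fmx_even1 _) eQ.
- by rewrite fmx_mul_kron PQ fmx_mul1l fmx_kron1.
- by rewrite fmx_mul_kron QP fmx_mul1l fmx_kron1.
by rewrite !mfD_tensor fmx_mulDr fmx_mulDl !fmx_mul_kron !fmx_mul1l !fmx_mul1r PD.
Qed.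

Lemma mf_iso_reindex M N (e : mfI M -> mfI N) :
    bijective e -> (forall i, mfpar N (e i) = mfpar M i) ->
    (forall t s, mfD N (e t) (e s) = mfD M t s) ->
  mf_iso M N.
Proof.
case=> g eK gK epar eD.
have egE j i : (j == e i) = (g j == i).
  by apply/eqP/eqP => [->|<-]; rewrite ?eK ?gK.
apply/mf_isoP; exists (fun j i => (j == e i)%:R), (fun i j => (j == e i)%:R); split.
- by move=> j i; have [->|] := eqVneq j (e i); rewrite ?epar ?eqxx.
- by move=> i j; have [->|] := eqVneq j (e i); rewrite ?epar ?eqxx.
- apply: funext2 => j j'.
  by rewrite /fmx_mul; under eq_bigr do rewrite egE; rewrite sum_deltal gK eq_sym.
- apply: funext2 => i i'.
  by rewrite /fmx_mul sum_deltar (bij_eq (Bijective eK gK)) eq_sym.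
apply: funext2 => j i.
rewrite /fmx_mul; under eq_bigr do rewrite egE.
by rewrite sum_deltal sum_deltar -eD gK.
Qed.

Lemma mf_iso_refl M : mf_iso M M.
Proof. by apply: (@mf_iso_reindex M M id) => //; exists id. Qed.

Lemma mf_tensor1m M : mf_iso (mf_tensor (mf_unit S) M) M.
Proof.
apply: (@mf_iso_reindex (mf_tensor (mf_unit S) M) M snd); first by exists (pair tt) => // -[[]].
- by [].
by move=> [[] t] [[] s]; rewrite /= mul0r add0r expr0 !mul1r.
Qed.

Lemma mf_tensorA M N L :
  mf_iso (mf_tensor (mf_tensor M N) L) (mf_tensor M (mf_tensor N L)).
Proof.
apply: (@mf_iso_reindex (mf_tensor (mf_tensor M N) L) (mf_tensor M (mf_tensor N L))
         (fun t => (t.1.1, (t.1.2, t.2)))).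
- by exists (fun t => ((t.1, t.2.1), t.2.2)) => [[[]]|[? []]].
- by move=> [[i j] k]; rewrite /= addbA.
move=> [[t1 t2] t3] [[s1 s2] s3] /=.
by rewrite !xpair_eqE -!mulnb !natrM signr_addb; ring.
Qed.

End MatrixFactorizationIso.

Section KoszulRowOperations.
Variable S : comNzRingType.
Implicit Types (r : S * S) (rs : seq (S * S)).

Definition koszul_iso rs rs' := mf_iso (koszul rs) (koszul rs').

Lemma koszul_cat rs rs' : mf_iso (mf_tensor (koszul rs) (koszul rs')) (koszul (rs ++ rs')).
Proof.
elim: rs => [|r rs IH] /=; first exact: mf_tensor1m.
exact: mf_iso_trans (mf_tensorA _ _ _) (mf_iso_tensorr _ IH).
Qed.

Lemma koszul_iso_cat pre rs rs' post :
  koszul_iso rs rs' -> koszul_iso (pre ++ rs ++ post) (pre ++ rs' ++ post).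
Proof.
move=> iso; elim: pre => [|r pre IH] /=; last exact: mf_iso_tensorr.
apply: mf_iso_trans (mf_iso_sym (koszul_cat _ _)) _.
exact: mf_iso_trans (mf_iso_tensorl _ iso) (koszul_cat _ _).
Qed.

Lemma sum_bool_unit (F : bool * unit -> S) :
  \sum_k F k = F (false, tt) + F (true, tt).
Proof.
rewrite (eq_bigr (fun k => F (k.1, k.2))) => [|[? []] //].
rewrite -(pair_bigA _ (fun k1 k2 => F (k1, k2))) big_bool addrC /=.
by rewrite !(big_pred1 tt) // => -[].
Qed.

Lemma sum_koszul2 (F : bool * (bool * unit) -> S) :
  \sum_k F k = F (false, (false, tt)) + F (false, (true, tt)) + F (true, (false, tt))
               + F (true, (true, tt)).
Proof.
rewrite (eq_bigr (fun k => F (k.1, k.2))) => [|[? ?] //].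
by rewrite -(pair_bigA _ (fun k1 k2 => F (k1, k2))) big_bool /= !sum_bool_unit; ring.
Qed.

Ltac koszul2_brute :=
  move=> [[] [[] []]] [[] [[] []]]; rewrite //= ?sum_koszul2 /=; try move=> _; try split; ring.

Lemma koszul2_swap r r' : koszul_iso [:: r; r'] [:: r'; r].
Proof.
(* the sign is the Koszul sign of exchanging the two odd generators *)
pose P (j i : bool * (bool * unit)) : S :=
  ((j.1 == i.2.1) && (j.2.1 == i.1))%:R * (-1) ^+ (i.1 && i.2.1).
by exists P, P; rewrite /P; split; koszul2_brute.
Qed.

Lemma koszul2_add_a a1 b1 a2 b2 c :
  koszul_iso [:: (a1, b1); (a2, b2)] [:: (a1 + c * a2, b1); (a2, b2 - c * b1)].
Proof.
pose E (j i : bool * (bool * unit)) : S :=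
  ((j == (false, (true, tt))) && (i == (true, (false, tt))))%:R.
exists (fun j i => (j == i)%:R - c * E j i), (fun i j => (i == j)%:R + c * E i j).
by rewrite /E; split; koszul2_brute.
Qed.

Lemma koszul2_add_b a1 b1 a2 b2 c :
  koszul_iso [:: (a1, b1); (a2, b2)] [:: (a1, b1 + c * a2); (a2, b2 - c * a1)].
Proof.
pose E (j i : bool * (bool * unit)) : S :=
  ((j == (true, (true, tt))) && (i == (false, (false, tt))))%:R.
exists (fun j i => (j == i)%:R + c * E j i), (fun i j => (i == j)%:R - c * E i j).
by rewrite /E; split; koszul2_brute.
Qed.

Lemma koszul_iso_eq rs rs' : rs = rs' -> koszul_iso rs rs'.
Proof. by move->; apply: mf_iso_refl. Qed.

Lemma koszul_iso_move r mid post : koszul_iso (r :: mid ++ post) (mid ++ r :: post).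
Proof.
elim: mid => [|m mid IH] /=; first exact: mf_iso_refl.
apply: mf_iso_trans (koszul_iso_cat [::] (mid ++ post) (koszul2_swap r m)) _.
exact: mf_iso_tensorr.
Qed.

Lemma koszul_iso_pair pre x mid y post x' y' :
    koszul_iso [:: x; y] [:: x'; y'] ->
  koszul_iso (pre ++ x :: mid ++ y :: post) (pre ++ x' :: mid ++ y' :: post).
Proof.
move=> iso.
have gather z w : koszul_iso (pre ++ z :: mid ++ w :: post) (pre ++ mid ++ z :: w :: post).
  by have := koszul_iso_cat pre [::] (koszul_iso_move z mid (w :: post)); rewrite !cats0.
apply: mf_iso_trans (gather x y) (mf_iso_trans _ (mf_iso_sym (gather x' y'))).
by have := koszul_iso_cat (pre ++ mid) post iso; rewrite -!catA.
Qed.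

Lemma koszul_iso_catC rs rs' : koszul_iso (rs ++ rs') (rs' ++ rs).
Proof.
elim: rs => [|r rs IH] /=; first by rewrite cats0; apply: mf_iso_refl.
exact: mf_iso_trans (mf_iso_tensorr _ IH) (koszul_iso_move r rs' rs).
Qed.

(* Add a4 to a2 and a3 to a1, then add to the b-column the skew-symmetric combination of
   the a-column with coefficients s_ij, and finally exchange rows 1, 2 and rows 3, 4. *)
Lemma koszul4_reduction (a1 a2 a3 a4 b1 b2 b3 b4 s12 s13 s14 s23 s24 s34 : S) :
  koszul_iso [:: (a1, b1); (a2, b2); (a3, b3); (a4, b4)]
    [:: (a2 + a4, b2 + s12 * (a1 + a3) + s13 * a4 + s14 * a3);
        (a1 + a3, b1 - s12 * (a2 + a4) + s23 * a4 + s24 * a3);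
        (a4, b4 - b2 - s13 * (a2 + a4) - s23 * (a1 + a3) + s34 * a3);
        (a3, b3 - b1 - s14 * (a2 + a4) - s24 * (a1 + a3) - s34 * a4)].
Proof.
apply: mf_iso_trans (koszul_iso_pair [:: _] [:: _] [::] (koszul2_add_a _ _ _ _ 1)) _.
apply: mf_iso_trans (koszul_iso_pair [::] [:: _] [:: _] (koszul2_add_a _ _ _ _ 1)) _.
apply: mf_iso_trans (koszul_iso_pair [::] [::] [:: _; _] (koszul2_add_b _ _ _ _ (- s12))) _.
apply: mf_iso_trans (koszul_iso_pair [::] [:: _] [:: _] (koszul2_add_b _ _ _ _ s24)) _.
apply: mf_iso_trans (koszul_iso_pair [::] [:: _; _] [::] (koszul2_add_b _ _ _ _ s23)) _.
apply: mf_iso_trans (koszul_iso_pair [:: _] [::] [:: _] (koszul2_add_b _ _ _ _ s14)) _.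
apply: mf_iso_trans (koszul_iso_pair [:: _] [:: _] [::] (koszul2_add_b _ _ _ _ s13)) _.
apply: mf_iso_trans (koszul_iso_pair [:: _; _] [::] [::] (koszul2_add_b _ _ _ _ (- s34))) _.
apply: mf_iso_trans (koszul_iso_pair [::] [::] [:: _; _] (koszul2_swap _ _)) _.
apply: mf_iso_trans (koszul_iso_pair [:: _; _] [::] [::] (koszul2_swap _ _)) _.
by apply: koszul_iso_eq; congr [:: (_, _); (_, _); (_, _); (_, _)]; ring.
Qed.

Lemma mf_iso_tensor_koszul rs1 rs2 rs3 rs4 :
    koszul_iso (rs1 ++ rs2) (rs3 ++ rs4) ->
  mf_iso (mf_tensor (koszul rs1) (koszul rs2)) (mf_tensor (koszul rs3) (koszul rs4)).
Proof.
move=> iso; exact: mf_iso_trans (koszul_cat _ _) (mf_iso_trans iso (mf_iso_sym (koszul_cat _ _))).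
Qed.

End KoszulRowOperations.

Section BaseChange.
Variables (S T : comNzRingType) (f : {rmorphism S -> T}).

Lemma mf_base_change_tensor (M N : mfd S) :
  mf_base_change f (mf_tensor M N) = mf_tensor (mf_base_change f M) (mf_base_change f N).
Proof.
rewrite /mf_base_change /mf_tensor /=; congr MFD; apply: funext2 => ? ?.
by rewrite rmorphD !rmorphM !rmorph_nat rmorphXn rmorphN1.
Qed.

Lemma mf_base_change_koszul (rs : seq (S * S)) :
  mf_base_change f (koszul rs) = koszul [seq (f r.1, f r.2) | r <- rs].
Proof.
elim: rs => [|r rs IH] /=.
  by rewrite /mf_base_change /=; congr MFD; apply: funext2 => ? ?; rewrite rmorph0.
rewrite mf_base_change_tensor IH; congr mf_tensor; rewrite /mf_base_change /=; congr MFD.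
by apply: funext2 => -[] []; rewrite ?rmorph0.
Qed.

End BaseChange.

Section CompleteSymmetric.
Variable S : comNzRingType.
Implicit Types (a b x : S) (l : seq S).

Lemma hsym0 l : hsym 0 l = 1.
Proof. by elim: l => [|x l IH] //=; rewrite big_ord1 expr0 mul1r. Qed.

Lemma hsymS_cons k x l : hsym k.+1 (x :: l) = hsym k.+1 l + x * hsym k (x :: l).
Proof.
rewrite /= big_ord_recl /= expr0 mul1r subn0; congr (_ + _).
rewrite big_distrr /=; apply: eq_bigr => j _.
by rewrite /bump /= add1n subSS exprS mulrA.
Qed.

Lemma hsym_dd k a b l :
  hsym k.+1 (a :: l) - hsym k.+1 (b :: l) = (a - b) * hsym k (a :: b :: l).
Proof.
elim: k => [|k IH]; first by rewrite !hsymS_cons !hsym0; ring.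
rewrite hsymS_cons [hsym k.+2 (b :: l)]hsymS_cons [hsym k.+1 (a :: b :: l)]hsymS_cons.
have -> : (a - b) * (hsym k.+1 (b :: l) + a * hsym k (a :: b :: l))
  = (a - b) * hsym k.+1 (b :: l) + a * ((a - b) * hsym k (a :: b :: l)) by ring.
rewrite -IH; ring.
Qed.

Lemma hsym_swap k a b l : hsym k (a :: b :: l) = hsym k (b :: a :: l).
Proof.
elim: k => [|k IH]; first by rewrite !hsym0.
rewrite hsymS_cons [RHS]hsymS_cons -IH.
by move/eqP: (hsym_dd k a b l); rewrite subr_eq => /eqP ->; ring.
Qed.

Lemma hsym_perm k l l' : perm_eq l l' -> hsym k l = hsym k l'.
Proof.
elim: l l' k => [|x l IH] l' k; first by move=> /perm_size /esym /size0nil ->.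
move=> pl; have xl' : x \in l' by rewrite -(perm_mem pl) mem_head.
move: pl; case/splitPr: xl' => p1 p2 pl.
have hsym_move k' : hsym k' (p1 ++ x :: p2) = hsym k' (x :: p1 ++ p2).
  elim: p1 k' {pl} => [|y p1 IHp] k' //; rewrite [RHS]hsym_swap /=.
  by apply: eq_bigr => j _; rewrite IHp.
rewrite hsym_move /=; apply: eq_bigr => j _; congr (_ * _); apply: IH.
by rewrite -(perm_cons x) (perm_trans pl) // -cat1s perm_catCA.
Qed.

Lemma hsym_opp k l : hsym k (map -%R l) = (-1) ^+ k * hsym k l.
Proof.
elim: l k => [|x l IH] k /=; first by case: k => [|k]; rewrite ?expr0 ?mul1r ?mulr0.
rewrite big_distrr /=; apply: eq_bigr => j _.
have -> : (-1) ^+ k = (-1) ^+ j * (-1) ^+ (k - j) :> S.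
  by rewrite -exprD subnKC // -ltnS ltn_ord.
rewrite [(- x) ^+ _]exprNn IH; ring.
Qed.

End CompleteSymmetric.

Section DividedDifferences.
Variables (S : comNzRingType) (N : nat).
Implicit Types (a b : S) (l : seq S).
Local Notation w := (wdd N).

Lemma wdd_perm l l' : perm_eq l l' -> w l = w l'.
Proof. by move=> pl; rewrite /wdd (perm_size pl); apply: hsym_perm. Qed.

Lemma wdd_opp l : (size l <= 2 * N + 2)%N -> w (map -%R l) = (-1) ^+ size l * w l.
Proof.
move=> sl; rewrite /wdd size_map hsym_opp; congr (_ * _).
by rewrite -[LHS]signr_odd -[RHS]signr_odd oddB // oddD oddM.
Qed.

Lemma wdd_cons_dd a b l :
  (size l <= 2 * N)%N -> w (a :: l) - w (b :: l) = (a - b) * w (a :: b :: l).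
Proof.
move=> sl; rewrite /wdd /=.
have -> : (2 * N + 2 - (size l).+1 = (2 * N + 2 - (size l).+2).+1)%N by lia.
exact: hsym_dd.
Qed.

Lemma wdd_dd a b l l1 l2 l3 :
    (size l <= 2 * N)%N ->
    perm_eq l1 (a :: l) -> perm_eq l2 (b :: l) -> perm_eq l3 (a :: b :: l) ->
  w l1 = w l2 + (a - b) * w l3.
Proof.
move=> sl p1 p2 p3; rewrite (wdd_perm p1) (wdd_perm p2) (wdd_perm p3) -wdd_cons_dd //.
by rewrite addrC subrK.
Qed.

Lemma wdd_opp_perm l l' :
  (size l <= 2 * N + 2)%N -> perm_eq l' (map -%R l) -> w l' = (-1) ^+ size l * w l.
Proof. by move=> sl pl; rewrite (wdd_perm pl) wdd_opp. Qed.

End DividedDifferences.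

Section WddIdentities.
Variables (S : comNzRingType) (N : nat) (u v s t : S).
Hypothesis N_gt0 : (0 < N)%N.
Local Notation W := (wdd N).

Ltac wdd_perm_solve := rewrite /= ?opprK; apply/permP => p /=; lia.
Ltac by_dd l := apply: (wdd_dd (l := l)); [rewrite /=; lia | wdd_perm_solve ..].
Ltac by_sign l := apply: (wdd_opp_perm (l := l)); [rewrite /=; lia | wdd_perm_solve].

Local Notation E := (W [:: u; -u; v; t] + W [:: u; -u; -v; t]).
Local Notation C := (W [:: u; v; -s; t] + W [:: u; -u; v; t] + W [:: u; -u; -v; t]).

Lemma wdd_oppv : W [:: u; -v; t] = (t + u) * E - W [:: u; v; t].
Proof.
have e1 : W [:: u; v; t] = W [:: u; v; -u] + (t - - u) * W [:: u; -u; v; t] by by_dd [:: u; v].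
have e2 : W [:: u; -v; t] = W [:: u; -v; -u] + (t - - u) * W [:: u; -u; -v; t].
  by by_dd [:: u; -v].
have e3 : W [:: u; -v; -u] = (-1) ^+ 3 * W [:: u; v; -u] by by_sign [:: u; v; -u].
by rewrite e1 e2 e3; ring.
Qed.

Lemma wdd_par_Ctilde :
  - (u + v + s + t) * (W [:: u; v; -s] - (u + t) * E)
  = (s + t) * (u + t) * C + W [:: -u; s] - W [:: -v; t].
Proof.
have e4 : W [:: u; v; -s] = W [:: u; v; t] + (- s - t) * W [:: u; v; -s; t] by by_dd [:: u; v].
have e5 : W [:: u; -s; t] = W [:: u; v; t] + (- s - v) * W [:: u; v; -s; t] by by_dd [:: u; t].
have e6 : W [:: u; t] = W [:: u; -s] + (t - - s) * W [:: u; -s; t] by by_dd [:: u].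
have e7 : W [:: -u; s] = (-1) ^+ 2 * W [:: u; -s] by by_sign [:: u; -s].
have e8 : W [:: -v; t] = W [:: u; t] + (- v - u) * W [:: u; -v; t] by by_dd [:: t].
rewrite e7 e8 e4 e6 e5 wdd_oppv; ring.
Qed.

Lemma wdd_vir_Ctilde :
  W [:: -u; t] - W [:: -v; s] - (u + v + s + t) * (W [:: u; v; -s] - (v + t) * E)
  = (v + t) * (s + t) * C.
Proof.
have e1 : W [:: u; v; t] = W [:: u; -u; t] + (v - - u) * W [:: u; -u; v; t] by by_dd [:: u; t].
have e2 : W [:: u; -u; t] = W [:: -v; -u; t] + (u - - v) * W [:: u; -u; -v; t].
  by by_dd [:: -u; t].
have e3 : W [:: -v; -u; t] = (-1) ^+ 3 * W [:: u; v; -t] by by_sign [:: u; v; -t].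
have e4 : W [:: u; v; -s] = W [:: u; v; t] + (- s - t) * W [:: u; v; -s; t] by by_dd [:: u; v].
have e5 : W [:: -s; v] = W [:: u; v] + (- s - u) * W [:: u; v; -s] by by_dd [:: v].
have e6 : W [:: -t; u] = W [:: u; v] + (- t - v) * W [:: u; v; -t] by by_dd [:: u].
have e7 : W [:: -v; s] = (-1) ^+ 2 * W [:: -s; v] by by_sign [:: -s; v].
have e8 : W [:: -u; t] = (-1) ^+ 2 * W [:: -t; u] by by_sign [:: -t; u].
rewrite e7 e5 e8 e6 e4 e1 e2 e3; ring.
Qed.

Lemma wdd_vir_Acmn : (u - v) * W [:: u; v; -s] = W [:: -u; s] - W [:: -v; s].
Proof.
have e1 : W [:: -u; s] = W [:: -v; s] + (- u - - v) * W [:: -u; -v; s] by by_dd [:: s].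
have e2 : W [:: -u; -v; s] = (-1) ^+ 3 * W [:: u; v; -s] by by_sign [:: u; v; -s].
rewrite e1 e2; ring.
Qed.

Local Notation H := (- (v + t) * (W [:: u; v; -s; t] + W [:: u; -v; -s; t]) - W [:: u; -v; -s]).

Lemma wdd_hor_Acmn :
  W [:: -u; v] + H * (s + t)
  = W [:: -u; s] + (v + t) * W [:: u; v; -s] - (v + t) * (u + t) * E.
Proof.
have e4 : W [:: u; v; -s] = W [:: u; v; t] + (- s - t) * W [:: u; v; -s; t] by by_dd [:: u; v].
have e5 : W [:: u; -v; -s] = W [:: u; -v; t] + (- s - t) * W [:: u; -v; -s; t].
  by by_dd [:: u; -v].
have e6 : W [:: -u; s] = W [:: -u; v] + (s - v) * W [:: s; v; -u] by by_dd [:: -u].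
have e7 : W [:: s; v; -u] = (-1) ^+ 3 * W [:: u; -v; -s] by by_sign [:: u; -v; -s].
rewrite e6 e7 e5 e4 wdd_oppv; ring.
Qed.

Lemma wdd_hor_Ctilde :
  W [:: -s; t] - W [:: -u; v] - H * (u + v + s + t)
  = (v + t) * (u + t) * C.
Proof.
have e5 : W [:: u; -s; t] = W [:: u; v; t] + (- s - v) * W [:: u; v; -s; t] by by_dd [:: u; t].
have e6 : W [:: u; -v; -s] = W [:: u; -v; t] + (- s - t) * W [:: u; -v; -s; t].
  by by_dd [:: u; -v].
have e8 : W [:: -v; -s; t] = W [:: u; -s; t] + (- v - u) * W [:: u; -v; -s; t].
  by by_dd [:: -s; t].
have e9 : W [:: -s; -v] = W [:: u; -v] + (- s - u) * W [:: u; -v; -s] by by_dd [:: -v].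
have e10 : W [:: -s; t] = W [:: -s; -v] + (t - - v) * W [:: -v; -s; t] by by_dd [:: -s].
have e11 : W [:: -u; v] = (-1) ^+ 2 * W [:: u; -v] by by_sign [:: u; -v].
rewrite e10 e9 e8 e6 e11 e5 wdd_oppv; ring.
Qed.

End WddIdentities.

Lemma eq_of_sub_eq (R : comNzRingType) (x y x' y' : R) : x' = y' -> x - y = x' - y' -> x = y.
Proof. by move=> -> /eqP; rewrite subrr subr_eq0 => /eqP. Qed.

HB.instance Definition _ (N : nat) := GRing.RMorphism.copy (phi_p N) (comp_mpoly _).

Section PhiP.
Variable N : nat.

Lemma tilde_koszul rs : tilde N (koszul rs) = koszul [seq (phi_p N r.1, phi_p N r.2) | r <- rs].
Proof. exact: mf_base_change_koszul. Qed.

Lemma phi_p_p1 : phi_p N p1 = xv 2 + xv 4. Proof. by rewrite /phi_p comp_mpolyXU inordK. Qed.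
Lemma phi_p_p2 : phi_p N p2 = yv 2 + yv 4. Proof. by rewrite /phi_p comp_mpolyXU inordK. Qed.
Lemma phi_p_q1 : phi_p N q1 = xv 3 + xv 4. Proof. by rewrite /phi_p comp_mpolyXU inordK. Qed.
Lemma phi_p_q2 : phi_p N q2 = yv 3 + yv 4. Proof. by rewrite /phi_p comp_mpolyXU inordK. Qed.
Lemma phi_p_r1 : phi_p N r1 = xv 1 + xv 4. Proof. by rewrite /phi_p comp_mpolyXU inordK. Qed.
Lemma phi_p_r2 : phi_p N r2 = yv 1 + yv 4. Proof. by rewrite /phi_p comp_mpolyXU inordK. Qed.
Lemma phi_p_C : phi_p N Cv = Ctilde N. Proof. by rewrite /phi_p comp_mpolyXU inordK. Qed.

Definition phi_pE := (phi_p_p1, phi_p_p2, phi_p_q1, phi_p_q2, phi_p_r1, phi_p_r2, phi_p_C).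

End PhiP.

Section TwoArcs.
Variable N : nat.
Hypothesis N_gt0 : (0 < N)%N.
Local Notation x1 := (xv 1). Local Notation x2 := (xv 2).
Local Notation x3 := (xv 3). Local Notation x4 := (xv 4).
Local Notation W := (wdd N).

(* Of the eight entries compared below, only the second and the sixth (the b-entries
   carrying [Acmn] and [Ctilde]) can need a divided-difference identity. *)
Lemma gam_par_iso : mf_iso (gam_par N) (mf_tensor (Kcmn N) (tilde N gam_par_p)).
Proof.
rewrite /gam_par /arcA /Kcmn /gam_par_p tilde_koszul; apply: mf_iso_tensor_koszul.
apply: mf_iso_trans (koszul4_reduction _ _ _ _ _ _ _ _ (- yv 1)
  (W [:: x1; x2; - x3] - (x1 + x4) * (W [:: x1; - x1; x2; x4] + W [:: x1; - x1; - x2; x4]))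
  (- (yv 3 + yv 4)) (- (yv 1 + yv 4)) x2 (- (yv 1 + yv 2))) (koszul_iso_eq _).
rewrite /= !rmorphD !rmorphM /= !phi_pE /Acmn /Bcmn /Ctilde.
congr [:: (_, _); (_, _); (_, _); (_, _)].
6: apply: (eq_of_sub_eq (R := Rr) (wdd_par_Ctilde x1 x2 x3 x4 N_gt0)).
all: by (try move: (wdd N) => ?); ring.
Qed.

Lemma gam_vir_iso : mf_iso (gam_vir N) (mf_tensor (Kcmn N) (tilde N gam_vir_p)).
Proof.
rewrite /gam_vir /arcA /Kcmn /gam_vir_p tilde_koszul; apply: mf_iso_tensor_koszul.
apply: mf_iso_trans (koszul_iso_catC [:: _; _] [:: _; _]) _.
apply: mf_iso_trans (koszul4_reduction _ _ _ _ _ _ _ _ (- yv 2)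
  (W [:: x1; x2; - x3] - (x2 + x4) * (W [:: x1; - x1; x2; x4] + W [:: x1; - x1; - x2; x4]))
  (- (yv 3 + yv 4)) (- (yv 2 + yv 4)) x1 (- (yv 1 + yv 2))) (koszul_iso_eq _).
rewrite /= !rmorphD !rmorphM /= !phi_pE /Acmn /Bcmn /Ctilde.
congr [:: (_, _); (_, _); (_, _); (_, _)].
2: apply: (eq_of_sub_eq (R := Rr) (wdd_vir_Acmn x1 x2 x3 N_gt0)).
6: apply: (eq_of_sub_eq (R := Rr) (wdd_vir_Ctilde x1 x2 x3 x4 N_gt0)).
all: by (try move: (wdd N) => ?); ring.
Qed.

Lemma gam_hor_iso : mf_iso (gam_hor N) (mf_tensor (Kcmn N) (tilde N gam_hor_p)).
Proof.
rewrite /gam_hor /arcA /Kcmn /gam_hor_p tilde_koszul; apply: mf_iso_tensor_koszul.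
apply: mf_iso_trans (koszul4_reduction _ _ _ _ _ _ _ _ (- yv 1)
  (- (x2 + x4) * (W [:: x1; x2; - x3; x4] + W [:: x1; - x2; - x3; x4]) - W [:: x1; - x2; - x3])
  (- (yv 2 + yv 4)) (- (yv 1 + yv 4)) x3 (- (yv 1 + yv 3))) (koszul_iso_eq _).
rewrite /= !rmorphD !rmorphM /= !phi_pE /Acmn /Bcmn /Ctilde.
congr [:: (_, _); (_, _); (_, _); (_, _)].
2: apply: (eq_of_sub_eq (R := Rr) (wdd_hor_Acmn x1 x2 x3 x4 N_gt0)).
6: apply: (eq_of_sub_eq (R := Rr) (wdd_hor_Ctilde x1 x2 x3 x4 N_gt0)).
all: by (try move: (wdd N) => ?); ring.
Qed.

End TwoArcs.

Theorem mainTheorem2 (N : nat) (hN : (1 <= N)%N) :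
  [/\ mf_iso (gam_par N) (mf_tensor (Kcmn N) (tilde N gam_par_p)),
      mf_iso (gam_vir N) (mf_tensor (Kcmn N) (tilde N gam_vir_p)) &
      mf_iso (gam_hor N) (mf_tensor (Kcmn N) (tilde N gam_hor_p))].
Proof. by split; [exact: gam_par_iso | exact: gam_vir_iso | exact: gam_hor_iso]. Qed.
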